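(* Every $k$-uniform $(D,c,\epsilon)$-structure with $D\ge 1$ is a $(\lambda,p)_k$-structure for $\lambda=c$ and $p=D^{-\epsilon/k}$.
   Context: For a hypergraph $\mathcal{H}$, $\Delta_i(\mathcal{H})$ is the maximum number of edges containing a fixed vertex set of size $i$. For parameters $D,c>0$ and $0<\epsilon\le 1$, a $k$-uniform hypergraph $\mathcal{H}$ is a $(D,c,\epsilon)$-structure if (i) $|\mathcal{E}(\mathcal{H})|\ge D|V(\mathcal{H})|$, (ii) $\Delta_1(\mathcal{H})\le cD$, (iii) $\Delta_2(\mathcal{H})\le cD^{1-\epsilon}$. For $p\in(0,1]$: $w_p(\mathcal{H})=\sum_{E}p^{|E|}$; $\bar w_p(\mathcal{H})=w_p(\mathcal{H})/|V(\mathcal{H})|$; $\Delta_{i,p}(\mathcal{H})=\max_{|L|=i}\sum_{E\supseteq L}p^{|E|}$. A hypergraph is $k$-bounded if all edges have size at most $k$; it is a $(\lambda,p)_k$-structure if it is $k$-bounded with (1) $\bar w_p(\mathcal{H})\ge p$, (2) $\Delta_{1,p}(\mathcal{H})\le\lambda\bar w_p(\mathcal{H})$, (3) $\Delta_{2,p}(\mathcal{H})\le\lambda\bar w_p(\mathcal{H})p^k$. *)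

From HB Require Import structures.
From mathcomp Require Import all_boot all_order all_algebra.
From mathcomp Require Import reals exp.
Set Implicit Arguments. Unset Strict Implicit. Unset Printing Implicit Defensive.
Import Order.TTheory GRing.Theory Num.Theory.
Local Open Scope ring_scope.

(* A hypergraph on the finite vertex set V is given by its edge set
   E : {set {set V}}; V(H) = V. *)

Section Hyper.
Variable V : finType.

Definition Delta (i : nat) (E : {set {set V}}) : nat :=
  \max_(L : {set V} | #|L| == i) #|[set e in E | L \subset e]|.

Definition uniform (k : nat) (E : {set {set V}}) : Prop :=
  forall e, e \in E -> #|e| = k.

Definition bounded (k : nat) (E : {set {set V}}) : Prop :=
  forall e, e \in E -> (#|e| <= k)%N.

Variable R : realType.

Definition wp (p : R) (E : {set {set V}}) : R := \sum_(e in E) p ^+ #|e|.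

Definition wbar (p : R) (E : {set {set V}}) : R := wp p E / #|V|%:R.

(* Delta_{i,p}(H) = max_{|L|=i} sum_{E ⊇ L} p^|E|  (all terms are >= 0) *)
Definition Deltap (i : nat) (p : R) (E : {set {set V}}) : R :=
  \big[Num.max/0]_(L : {set V} | #|L| == i) \sum_(e in E | L \subset e) p ^+ #|e|.

(* (D,c,eps)-structure (k-uniformity is stated separately) *)
Definition Dce_structure (D c eps : R) (E : {set {set V}}) : Prop :=
  [/\ D * #|V|%:R <= #|E|%:R,
      (Delta 1 E)%:R <= c * D &
      (Delta 2 E)%:R <= c * powR D (1 - eps)].

Definition lp_structure (k : nat) (lam p : R) (E : {set {set V}}) : Prop :=
  [/\ 0 < p <= 1, bounded k E,
      p <= wbar p E,
      Deltap 1 p E <= lam * wbar p E &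
      Deltap 2 p E <= lam * wbar p E * p ^+ k].
End Hyper.

(* With p = D^(-eps/k) every edge of a k-uniform hypergraph has weight
   p^k = D^(-eps), so every weighted quantity is the corresponding count
   scaled by D^(-eps): w_p = |E| D^(-eps) >= |V| D^(1-eps) and
   Delta_{i,p} = Delta_i D^(-eps).  The degree bounds of a (D,c,eps)-structure
   thus become the weight bounds, and D^(1-eps) >= 1 >= p since D >= 1. *)
From HB Require Import structures.
From mathcomp Require Import all_boot all_order all_algebra.
From mathcomp Require Import reals exp.
Set Implicit Arguments. Unset Strict Implicit. Unset Printing Implicit Defensive.
Import Order.TTheory GRing.Theory Num.Theory.
Local Open Scope ring_scope.

Section UniformWeights.
Variables (V : finType) (R : realType).
Variables (k : nat) (E : {set {set V}}) (p : R).
Hypothesis unifE : uniform k E.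
Hypothesis p_ge0 : 0 <= p.

Lemma wp_uniform : wp p E = #|E|%:R * p ^+ k.
Proof.
rewrite /wp (eq_bigr (fun=> p ^+ k)) => [|e eE]; last by rewrite unifE.
by rewrite sumr_const mulr_natl.
Qed.

Lemma link_weight_uniform (L : {set V}) :
  \sum_(e in E | L \subset e) p ^+ #|e|
  = #|[set e in E | L \subset e]|%:R * p ^+ k.
Proof.
rewrite (eq_bigr (fun=> p ^+ k)) => [|e /andP[eE _]]; last by rewrite unifE.
by rewrite -big_set sumr_const mulr_natl.
Qed.

Lemma Deltap_uniform (i : nat) : Deltap i p E = (Delta i E)%:R * p ^+ k.
Proof.
have pk_ge0 : 0 <= p ^+ k by rewrite exprn_ge0.
have scale0 : 0%:R * p ^+ k = 0 by rewrite mul0r.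
rewrite /Deltap /Delta.
rewrite (big_morph (fun n : nat => n%:R * p ^+ k)
  (op1 := Num.max) (op2 := maxn) _ scale0).
  by apply: eq_bigr => L _; rewrite link_weight_uniform.
by move=> m n; rewrite -maxEnat natr_max maxr_pMl.
Qed.

Lemma wbar_uniform_ge (D : R) : (0 < #|V|)%N ->
  D * #|V|%:R <= #|E|%:R -> D * p ^+ k <= wbar p E.
Proof.
move=> V_gt0 densityE.
rewrite /wbar wp_uniform ler_pdivlMr ?ltr0n // mulrAC.
by rewrite ler_wpM2r ?exprn_ge0.
Qed.

End UniformWeights.

Section PowersOfD.
Variables (R : realType) (D : R).
Hypothesis D_ge1 : 1 <= D.

Lemma powR_le1_nonpos (a : R) : a <= 0 -> powR D a <= 1.
Proof. by move=> a_le0; rewrite -(powRr0 D) ler_powR. Qed.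

Lemma powR_ge1_nonneg (a : R) : 0 <= a -> 1 <= powR D a.
Proof. by move=> a_ge0; rewrite -(powRr0 D) ler_powR. Qed.

Lemma powR_div_exprn (a : R) (k : nat) : (0 < k)%N ->
  powR D (a / k%:R) ^+ k = powR D a.
Proof.
move=> k_gt0; have D_ge0 : 0 <= D by apply: le_trans D_ge1.
rewrite -powR_mulrn ?powR_ge0 // -powRrM divfK //.
by rewrite pnatr_eq0 -lt0n.
Qed.

Lemma mul_powR_opp (a : R) : D * powR D (- a) = powR D (1 - a).
Proof.
have D_neq0 : D != 0 by rewrite gt_eqF // (lt_le_trans ltr01).
by rewrite powRD ?D_neq0 ?implybT // powRr1 // (le_trans ler01).
Qed.

End PowersOfD.

Theorem lemma3p4 (R : realType) (V : finType) (E : {set {set V}}) (k : nat)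
    (D c eps : R) :
  (0 < k)%N -> (0 < #|V|)%N ->
  0 < D -> 0 < c -> 0 < eps <= 1 -> 1 <= D ->
  uniform k E -> Dce_structure D c eps E ->
  lp_structure k c (powR D (- (eps / k%:R))) E.
Proof.
move=> k_gt0 V_gt0 D_gt0 c_gt0 /andP[eps_gt0 eps_le1] D_ge1 unifE
  [densityE Delta1E Delta2E].
set p := powR D _; set q := powR D (- eps).
have p_gt0 : 0 < p by apply: powR_gt0.
have p_le1 : p <= 1.
  by apply: powR_le1_nonpos => //; rewrite oppr_le0 divr_ge0 ?ler0n ?ltW.
have pk : p ^+ k = q by rewrite /p -mulNr powR_div_exprn.
have q_gt0 : 0 < q by apply: powR_gt0.
have Dq_le_wbar : D * q <= wbar p E.
  by rewrite -pk wbar_uniform_ge ?(ltW p_gt0).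
have Dq_ge1 : 1 <= D * q by rewrite mul_powR_opp // powR_ge1_nonneg ?subr_ge0.
split; rewrite ?p_gt0 ?p_le1 //.
- by move=> e /unifE ->.
- exact: le_trans p_le1 (le_trans Dq_ge1 Dq_le_wbar).
- rewrite (Deltap_uniform unifE (ltW p_gt0)) pk.
  apply: le_trans (ler_wpM2r (ltW q_gt0) Delta1E) _.
  by rewrite -mulrA ler_pM2l.
- rewrite (Deltap_uniform unifE (ltW p_gt0)) pk.
  apply: le_trans (ler_wpM2r (ltW q_gt0) Delta2E) _.
  rewrite -(mul_powR_opp D_ge1) -/q.
  by rewrite ler_pM2r // ler_pM2l.
Qed.
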